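(* Let $\mathbf{x}\in\mathbb{R}^3\setminus\mathbb{I}$ lie outside the region enclosed by $\mathcal{M}$, and suppose its dispersed projection $\mathbf{s}$ lies in the relative interior of a face $T=(\mathbf{v}_1,\mathbf{v}_2,\mathbf{v}_3)$ of $\mathcal{M}$, with barycentric coordinates $(\alpha_1,\alpha_2,\alpha_3)$ with respect to $T$ (so $\mathbf{s}=\mathbf{s}_T$ is obtained by barycentric interpolated projection with orientation $\sigma=+1$). Let $l=\langle \mathbf{x}-\mathbf{v}_1,\mathbf{n}_T\rangle$ be the distance from $\mathbf{x}$ to the plane of $T$, and let $\mathbf{a}_i=\hat{\mathbf{n}}^{T,+}_i/\langle \hat{\mathbf{n}}^{T,+}_i,\mathbf{n}_T\rangle$. Then $$\mathbf{x}-\mathbf{s}=l\sum_{i=1}^3\alpha_i\,\mathbf{a}_i .$$ Consequently $\mathbf{x}-\mathbf{s}=c\,\mathbf{n}_{\mathbf{s}}$ with $c=\|\mathbf{x}-\mathbf{s}\|>0$, where $\mathbf{n}_{\mathbf{s}}=\mathbf{w}/\|\mathbf{w}\|$, $\mathbf{w}=\sum_i\alpha_i\mathbf{a}_i\neq 0$, is a unit vector depending only on $T$ (with its aligned vertex normals) and the barycentric coordinates of $\mathbf{s}$, and not otherwise on $\mathbf{x}$.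
   Context: Let $\mathcal{M}$ be a triangle mesh in $\mathbb{R}^3$ that is watertight (closed, without self-intersections) and has no faces of zero area. Each face $T=(\mathbf{v}_1,\mathbf{v}_2,\mathbf{v}_3)$ has an outward unit face normal $\mathbf{n}_T$; each vertex $\mathbf{v}$ has a unit vertex normal $\mathbf{n}_{\mathbf{v}}$, and for every face $T$ and every vertex $\mathbf{v}$ of $T$, $\langle \mathbf{n}_{\mathbf{v}},\mathbf{n}_T\rangle>0$. Vertex normal alignment of a face $T$ with orientation $\sigma\in\{+1,-1\}$: put $\mathbf{m}_T=\sigma\mathbf{n}_T$; for each $i\in\{1,2,3\}$ let $j,k$ be the other two indices, $\mathbf{e}_1=\mathbf{v}_j-\mathbf{v}_i$, $\mathbf{e}_2=\mathbf{v}_k-\mathbf{v}_i$, $\mathbf{m}_i=\sigma\mathbf{n}_{\mathbf{v}_i}$, write the in-plane part $\mathbf{m}_i-\langle\mathbf{m}_i,\mathbf{m}_T\rangle\mathbf{m}_T=c_1\mathbf{e}_1+c_2\mathbf{e}_2$, and define the aligned normal $\hat{\mathbf{n}}^{T,\sigma}_i=(\mathbf{m}_i-\max(0,c_1)\mathbf{e}_1-\max(0,c_2)\mathbf{e}_2)/\|\mathbf{m}_i-\max(0,c_1)\mathbf{e}_1-\max(0,c_2)\mathbf{e}_2\|$. (Aligned normals depend on the face $T$, not only on the vertex.) Barycentric interpolated projection onto $T$ with orientation $\sigma$: for $\mathbf{x}$ with $l:=\langle\mathbf{x}-\mathbf{v}_1,\sigma\mathbf{n}_T\rangle\ge 0$,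 set $\mathbf{v}_i'=\mathbf{v}_i+\big(l/\langle\hat{\mathbf{n}}^{T,\sigma}_i,\sigma\mathbf{n}_T\rangle\big)\hat{\mathbf{n}}^{T,\sigma}_i$, forming the parallel triangle $T'=(\mathbf{v}_1',\mathbf{v}_2',\mathbf{v}_3')$ in the plane through $\mathbf{x}$ parallel to $T$. If $\mathbf{x}\in T'$, i.e. $\mathbf{x}=\sum_i\alpha_i\mathbf{v}_i'$ with $\alpha_i\ge0$, $\sum_i\alpha_i=1$, the projection is $\mathbf{s}_T=\sum_i\alpha_i\mathbf{v}_i$. Dispersed projection of $\mathbf{x}$ (with $\sigma=+1$ if $\mathbf{x}$ is outside the region enclosed by $\mathcal{M}$ and $\sigma=-1$ if inside): (1) compute the nearest point $\tilde{\mathbf{s}}$ of $\mathcal{M}$ to $\mathbf{x}$; (2) let $\mathcal{T}$ be the set of faces containing $\tilde{\mathbf{s}}$; (3) apply vertex normal alignment with orientation $\sigma$ to each $T\in\mathcal{T}$; (4) discard those $T$ with $\mathbf{x}\notin T'$; (5) compute $\mathbf{s}_T$ for the remaining $T$; (6) let $\mathbf{s}$ be the $\mathbf{s}_T$ nearest to $\mathbf{x}$. It is assumed that for every $\mathbf{x}\in\mathbb{R}^3$ at least one face survives step (4), so $\mathbf{s}$ is defined. Exceptional set: for a face $T$, orientation $\sigma$, and $\mathbf{a}^{T,\sigma}_i=\hat{\mathbf{n}}^{T,\sigma}_i/\langle\hat{\mathbf{n}}^{T,\sigma}_i,\sigma\mathbf{n}_T\rangle$, let $\mathbb{I}$ be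 the union over all faces $T$, both $\sigma$, and all pairs of distinct vertices $\mathbf{v}_i,\mathbf{v}_j$ of $T$ of the bilinear surfaces $\{(1-u)\mathbf{v}_i+u\mathbf{v}_j+t((1-u)\mathbf{a}^{T,\sigma}_i+u\mathbf{a}^{T,\sigma}_j): u\in[0,1],t\ge0\}$ (a set of Lebesgue measure zero). *)

From HB Require Import structures.
From mathcomp Require Import all_boot all_order all_algebra.
From mathcomp Require Import all_classical all_reals topology normedtype.
Set Implicit Arguments. Unset Strict Implicit. Unset Printing Implicit Defensive.
Import Order.TTheory GRing.Theory Num.Theory.
Import numFieldNormedType.Exports.
Local Open Scope ring_scope.
Local Open Scope classical_set_scope.

Section Mesh.
Variable R : realType.
Notation vec := 'rV[R]_3.

Definition dot (u v : vec) : R := \sum_(k < 3) u ord0 k * v ord0 k.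
Definition vnorm (u : vec) : R := Num.sqrt (dot u u).

Definition cross (u v : vec) : vec :=
  \row_(k < 3)
    (if val k == 0%N then u ord0 (inord 1) * v ord0 (inord 2) - u ord0 (inord 2) * v ord0 (inord 1)
     else if val k == 1%N then u ord0 (inord 2) * v ord0 (inord 0) - u ord0 (inord 0) * v ord0 (inord 2)
     else u ord0 (inord 0) * v ord0 (inord 1) - u ord0 (inord 1) * v ord0 (inord 0)).

Definition sh (i : 'I_3) (d : nat) : 'I_3 := inord ((i + d) %% 3).

(* orientation sigma: true = +1, false = -1 *)
Definition sgn (b : bool) : R := if b then 1 else -1.

(* A triangle mesh: vertex type V with positions pos and vertex normals vn,
   face type F, face T has vertices fv T 0, fv T 1, fv T 2 (in this order). *)
Variables (V F : finType) (pos vn : V -> vec) (fv : F -> 'I_3 -> V).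

Definition vert (T : F) (i : 'I_3) : vec := pos (fv T i).

Definition face_cross (T : F) : vec :=
  cross (vert T (inord 1) - vert T (inord 0)) (vert T (inord 2) - vert T (inord 0)).

Definition nT (T : F) : vec := (vnorm (face_cross T))^-1 *: face_cross T.

(* Vertex normal alignment of face T with orientation b (sigma = sgn b), vertex i.
   c1, c2 are the unique coefficients with in-plane part = c1 e1 + c2 e2,
   written out by Cramer's rule on the Gram system. *)
Definition aligned (T : F) (b : bool) (i : 'I_3) : vec :=
  let mT := sgn b *: nT T in
  let e1 := vert T (sh i 1) - vert T i in
  let e2 := vert T (sh i 2) - vert T i in
  let m := sgn b *: vn (fv T i) in
  let p := m - dot m mT *: mT in
  let g11 := dot e1 e1 in let g12 := dot e1 e2 in let g22 := dot e2 e2 in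
  let b1 := dot p e1 in let b2 := dot p e2 in
  let det := g11 * g22 - g12 * g12 in
  let c1 := (b1 * g22 - b2 * g12) / det in
  let c2 := (b2 * g11 - b1 * g12) / det in
  let u := m - Num.max 0 c1 *: e1 - Num.max 0 c2 *: e2 in
  (vnorm u)^-1 *: u.

Definition acoef (T : F) (b : bool) (i : 'I_3) : vec :=
  (dot (aligned T b i) (sgn b *: nT T))^-1 *: aligned T b i.

Definition lval (T : F) (b : bool) (x : vec) : R := dot (x - vert T ord0) (sgn b *: nT T).

Definition vshift (T : F) (b : bool) (x : vec) (i : 'I_3) : vec :=
  vert T i + lval T b x *: acoef T b i.

(* s is the barycentric interpolated projection of x onto T with orientation b
   (this includes the requirement l >= 0 and x in T') *)
Definition bip (T : F) (b : bool) (x s : vec) : Prop :=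
  0 <= lval T b x /\
  exists al : 'I_3 -> R, (forall i, 0 <= al i) /\ \sum_i al i = 1 /\
    x = \sum_i al i *: vshift T b x i /\ s = \sum_i al i *: vert T i.

Definition survives (T : F) (b : bool) (x : vec) : Prop := exists s, bip T b x s.

Definition on_face (T : F) (p : vec) : Prop :=
  exists be : 'I_3 -> R, (forall i, 0 <= be i) /\ \sum_i be i = 1 /\ p = \sum_i be i *: vert T i.

Definition on_mesh (p : vec) : Prop := exists T, on_face T p.

Definition nearest_point (x st : vec) : Prop :=
  on_mesh st /\ forall p, on_mesh p -> vnorm (x - st) <= vnorm (x - p).

Definition dispersed_proj (b : bool) (x s : vec) : Prop :=
  exists st, nearest_point x st /\
    exists T, on_face T st /\ bip T b x s /\
      forall T2 s2, on_face T2 st -> bip T2 b x s2 -> vnorm (x - s) <= vnorm (x - s2).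

Definition exceptional (x : vec) : Prop :=
  exists (T : F) (b : bool) (i j : 'I_3), i != j /\
    exists u t : R, 0 <= u <= 1 /\ 0 <= t /\
      x = (1 - u) *: vert T i + u *: vert T j
          + t *: ((1 - u) *: acoef T b i + u *: acoef T b j).

Definition edge (T : F) (i : 'I_3) : V * V := (fv T i, fv T (sh i 1)).

(* closed: every directed edge occurs in exactly one face, and its reverse
   occurs in some face (hence exactly one) *)
Definition closed_mesh : Prop :=
  (forall T1 T2 i j, edge T1 i = edge T2 j -> T1 = T2 /\ i = j) /\
  (forall T i, exists T2 j, edge T2 j = (fv T (sh i 1), fv T i)).

Definition no_self_intersection : Prop :=
  injective pos /\
  forall T1 T2 p, T1 != T2 -> on_face T1 p -> on_face T2 p ->
    exists be : V -> R, (forall v, 0 <= be v) /\ \sum_v be v = 1 /\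
      (forall v, be v != 0 -> (exists i, fv T1 i = v) /\ (exists j, fv T2 j = v)) /\
      p = \sum_v be v *: pos v.

Definition watertight : Prop := closed_mesh /\ no_self_intersection.

Definition no_zero_area : Prop := forall T, face_cross T != 0.

Definition encloses (Omega : set vec) : Prop :=
  closed Omega /\ bounded_set Omega /\
  closure Omega `\` interior Omega = [set p | on_mesh p].

Definition outward_normals (Omega : set vec) : Prop :=
  forall T, exists e : R, 0 < e /\ forall t : R, 0 < t < e ->
    ~ Omega (3^-1 *: (vert T 0 + vert T (inord 1) + vert T (inord 2)) + t *: nT T).

Definition normal_hyps : Prop :=
  (forall v, vnorm (vn v) = 1) /\ (forall T i, 0 < dot (vn (fv T i)) (nT T)).

Definition always_survives (Omega : set vec) : Prop :=
  forall y, exists st, nearest_point y st /\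
    exists T, on_face T st /\ survives T (`[< ~ Omega y >]) y.

End Mesh.

From HB Require Import structures.
From mathcomp Require Import all_boot all_order all_algebra.
From mathcomp Require Import all_classical all_reals topology normedtype.
From mathcomp Require Import ring.
Import Order.TTheory GRing.Theory Num.Theory.
Import numFieldNormedType.Exports.
Local Open Scope ring_scope.
Local Open Scope classical_set_scope.

(* Since s lies in the relative interior of T, T is the only face through s: by
   the absence of self-intersections any other face T2 through s contains all
   three vertices of T, and then T2 either repeats a directed edge of T, which
   closedness forbids, or has normal -n_T, which contradicts <n_v, n_T> > 0 at
   a shared vertex.  Hence the dispersed projection is computed on T, with the
   barycentric weights of s, and x = sum_i alpha_i (v_i + l a_i) gives
   x - s = l sum_i alpha_i a_i.  As s is on the boundary of the closed region
   and x is outside it, x <> s, whence l > 0 and w <> 0. *)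

Set Implicit Arguments.
Unset Strict Implicit.

Notation i0 := (inord 0 : 'I_3).
Notation i1 := (inord 1 : 'I_3).
Notation i2 := (inord 2 : 'I_3).

Lemma ord3_cases (k : 'I_3) : k = i0 \/ k = i1 \/ k = i2.
Proof.
case: k => [[|[|[|k]]] Hk] //; [left | right; left | right; right];
  by apply/val_inj; rewrite /= inordK.
Qed.

Lemma sum_ord3 (M : nmodType) (f : 'I_3 -> M) : \sum_(i < 3) f i = f i0 + f i1 + f i2.
Proof.
rewrite !big_ord_recl big_ord0 addr0 addrA.
by congr (f _ + f _ + f _); apply/val_inj; rewrite /= ?inordK.
Qed.

Lemma sum_inj_image (I J : finType) (M : nmodType) (f : I -> J) (g : J -> M) :
  injective f -> (forall j, (forall i, f i != j) -> g j = 0) ->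
  \sum_j g j = \sum_i g (f i).
Proof.
move=> f_inj g0.
rewrite (bigID [in [set f i | i in I]%SET]) /= [X in _ + X]big1 ?addr0.
  by rewrite big_imset //; move=> a b _ _ /f_inj.
move=> j /imsetP fj; apply: g0 => i; apply/eqP => fij; apply: fj.
by exists i.
Qed.

Section Vectors.
Variable R : realType.
Notation vec := 'rV[R]_3.

Lemma row3_eq (u v : vec) : u ord0 i0 = v ord0 i0 -> u ord0 i1 = v ord0 i1 ->
  u ord0 i2 = v ord0 i2 -> u = v.
Proof.
move=> h0 h1 h2; apply/rowP => k.
by case: (ord3_cases k) => [|[|]] ->.
Qed.

Lemma cross0l (w : vec) : cross 0 w = 0.
Proof. by apply: row3_eq; rewrite !mxE /= !inordK //=; ring. Qed.

Lemma cross0r (w : vec) : cross w 0 = 0.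
Proof. by apply: row3_eq; rewrite !mxE /= !inordK //=; ring. Qed.

Lemma crossvv (w : vec) : cross w w = 0.
Proof. by apply: row3_eq; rewrite !mxE /= !inordK //=; ring. Qed.

Lemma cross_combl (a b : R) (u1 u2 : vec) : cross (a *: u1 + b *: u2) u2 = a *: cross u1 u2.
Proof. by apply: row3_eq; rewrite !mxE /= !inordK //= ?mxE; ring. Qed.

Lemma cross_combr (a b : R) (u1 u2 : vec) : cross u1 (a *: u1 + b *: u2) = b *: cross u1 u2.
Proof. by apply: row3_eq; rewrite !mxE /= !inordK //= ?mxE; ring. Qed.

Lemma cross_lin_indep (u1 u2 : vec) (a b : R) :
  cross u1 u2 != 0 -> a *: u1 + b *: u2 = 0 -> a = 0 /\ b = 0.
Proof.
move=> c_neq0 comb0.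
have := cross_combl a b u1 u2; have := cross_combr a b u1 u2.
rewrite comb0 cross0l cross0r => /esym/eqP + /esym/eqP.
by rewrite !scaler_eq0 (negbTE c_neq0) !orbF => /eqP-> /eqP->.
Qed.

Lemma cross_edges_swap (v0 v1 v2 : vec) :
  [/\ cross (v2 - v0) (v1 - v0) = - cross (v1 - v0) (v2 - v0),
      cross (v0 - v1) (v2 - v1) = - cross (v1 - v0) (v2 - v0) &
      cross (v1 - v2) (v0 - v2) = - cross (v1 - v0) (v2 - v0)].
Proof. by split; apply: row3_eq; rewrite !mxE /= !inordK //= ?mxE; ring. Qed.

Lemma bary_coord_uniq (v : 'I_3 -> vec) (p q : 'I_3 -> R) :
  cross (v i1 - v i0) (v i2 - v i0) != 0 ->
  \sum_i p i = 1 -> \sum_i q i = 1 ->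
  \sum_i p i *: v i = \sum_i q i *: v i -> p =1 q.
Proof.
move=> c_neq0 p1 q1 pq.
pose d i := p i - q i.
have d_sum : \sum_i d i = 0 by rewrite sumrB p1 q1 subrr.
have d_comb : \sum_i d i *: (v i - v i0) = 0.
  under eq_bigr do rewrite scalerBr scalerBl.
  by rewrite !sumrB -scaler_suml d_sum scale0r pq !subrr.
rewrite sum_ord3 subrr scaler0 add0r in d_comb.
have [d1 d2] := cross_lin_indep c_neq0 d_comb.
have d0 : d i0 = 0 by move: d_sum; rewrite sum_ord3 d1 d2 !addr0.
move=> i; apply/eqP; rewrite -subr_eq0.
by case: (ord3_cases i) => [|[|]] ->; apply/eqP.
Qed.

Lemma dotNr (u w : vec) : dot u (- w) = - dot u w.
Proof. by rewrite /dot -sumrN; apply: eq_bigr => k _; rewrite mxE mulrN. Qed.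

Lemma vnormZ (a : R) (w : vec) : vnorm (a *: w) = `|a| * vnorm w.
Proof.
rewrite /vnorm; have -> : dot (a *: w) (a *: w) = a ^+ 2 * dot w w.
  by rewrite /dot mulr_sumr; apply: eq_bigr => k _; rewrite !mxE; ring.
by rewrite sqrtrM ?sqr_ge0 // sqrtr_sqr.
Qed.

Lemma vnormN (w : vec) : vnorm (- w) = vnorm w.
Proof. by rewrite -scaleN1r vnormZ normrN1 mul1r. Qed.

Lemma vnorm_gt0 (w : vec) : w != 0 -> 0 < vnorm w.
Proof.
move=> w_neq0.
have sq_ge0 k : 0 <= w ord0 k * w ord0 k by rewrite -expr2 sqr_ge0.
rewrite sqrtr_gt0 lt_neqAle eq_sym sumr_ge0 ?andbT //.
apply: contra w_neq0 => /eqP dot0; apply/eqP/rowP => k.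
have /eqP := psumr_eq0P (fun k _ => sq_ge0 k) dot0 (i := k) isT.
by rewrite mulf_eq0 orbb mxE => /eqP.
Qed.

Lemma vnorm_pos_scale (a : R) (w : vec) : 0 < a -> w != 0 ->
  a *: w = vnorm (a *: w) *: ((vnorm w)^-1 *: w).
Proof.
move=> a_gt0 w_neq0.
by rewrite vnormZ gtr0_norm // scalerA mulfK // gt_eqF // vnorm_gt0.
Qed.

End Vectors.

Section Mesh.
Variables (R : realType) (V F : finType) (pos vn : V -> 'rV[R]_3) (fv : F -> 'I_3 -> V).

Lemma sh1E : [/\ sh i0 1 = i1, sh i1 1 = i2 & sh i2 1 = i0].
Proof. by split; apply/val_inj; rewrite /sh /= !inordK. Qed.

Lemma fv_inj T : face_cross pos fv T != 0 -> injective (fv T).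
Proof.
move=> area_neq0 a b fv_ab; apply/eqP; apply: contraNT area_neq0 => a_neq_b.
rewrite /face_cross /vert; apply/eqP.
move: a_neq_b fv_ab; case: (ord3_cases a) => [|[|]] ->;
  case: (ord3_cases b) => [|[|]] ->; rewrite ?eqxx // => _ ->;
  by rewrite ?subrr ?cross0l ?cross0r ?crossvv.
Qed.

Lemma same_vertices_edge_or_flip T T2 j0 j1 j2 : injective (fv T) ->
  fv T2 j0 = fv T i0 -> fv T2 j1 = fv T i1 -> fv T2 j2 = fv T i2 ->
  edge fv T2 j0 = edge fv T i0 \/ face_cross pos fv T2 = - face_cross pos fv T.
Proof.
move=> fv_injT.
have n01 : fv T i0 <> fv T i1 by move/fv_injT/eqP; rewrite -val_eqE /= !inordK.
have n02 : fv T i0 <> fv T i2 by move/fv_injT/eqP; rewrite -val_eqE /= !inordK.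
have n12 : fv T i1 <> fv T i2 by move/fv_injT/eqP; rewrite -val_eqE /= !inordK.
have [r1 r2 r3] := cross_edges_swap (pos (fv T i0)) (pos (fv T i1)) (pos (fv T i2)).
have [s0 s1 s2] := sh1E.
rewrite /edge /face_cross /vert.
case: (ord3_cases j0) => [|[|]] ->; case: (ord3_cases j1) => [|[|]] ->;
  case: (ord3_cases j2) => [|[|]] -> => e0 e1 e2; try congruence;
  rewrite ?s0 ?s1 ?s2;
  first [by left; congruence | by right; rewrite e0 e1 e2 ?r1 ?r2 ?r3].
Qed.

Lemma flipped_faces_no_common_vertex T T2 i j : normal_hyps pos vn fv ->
  face_cross pos fv T2 = - face_cross pos fv T -> fv T2 j <> fv T i.
Proof.
move=> [_ vn_pos] flip same.
have := vn_pos T2 j; rewrite same /nT flip vnormN scalerN dotNr oppr_gt0.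
by move=> /lt_trans /(_ (vn_pos T i)); rewrite ltxx.
Qed.

Lemma interior_point_vertices T T2 (al : 'I_3 -> R) :
  no_self_intersection pos fv -> face_cross pos fv T != 0 ->
  (forall i, 0 < al i) -> \sum_i al i = 1 -> T != T2 ->
  on_face pos fv T2 (\sum_i al i *: vert pos fv T i) ->
  forall i, exists j, fv T2 j = fv T i.
Proof.
move=> [_ nsi] area_neq0 al_gt0 al1 T_neq_T2 sT2 i.
have sT : on_face pos fv T (\sum_i al i *: vert pos fv T i).
  by exists al; split=> // k; apply: ltW.
have [ga [_ [ga1 [ga_supp sga]]]] := nsi T T2 _ T_neq_T2 sT sT2.
have fv_injT := fv_inj area_neq0.
have ga_out v : (forall k, fv T k != v) -> ga v = 0.
  move=> v_out; apply/eqP; apply: contraT => /ga_supp [[k /eqP]].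
  by rewrite (negbTE (v_out k)).
have ga_al : (fun k => ga (fv T k)) =1 al.
  apply: (bary_coord_uniq (v := vert pos fv T)) area_neq0 _ al1 _.
    by rewrite -(sum_inj_image fv_injT ga_out) ga1.
  rewrite sga (sum_inj_image (g := fun v => ga v *: pos v) fv_injT) // => v v_out.
  by rewrite ga_out // scale0r.
by have /gt_eqF/negbT := al_gt0 i; rewrite -ga_al => /ga_supp [].
Qed.

Lemma face_of_interior_point T T2 (al : 'I_3 -> R) :
  watertight pos fv -> no_zero_area pos fv -> normal_hyps pos vn fv ->
  (forall i, 0 < al i) -> \sum_i al i = 1 ->
  on_face pos fv T2 (\sum_i al i *: vert pos fv T i) -> T2 = T.
Proof.
move=> [[edge_uniq _] nsi] area_neq0 nhyps al_gt0 al1 sT2.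
apply/eqP; apply: contraT; rewrite eq_sym => T_neq_T2.
have T_verts := interior_point_vertices nsi (area_neq0 T) al_gt0 al1 T_neq_T2 sT2.
have [[j0 e0] [j1 e1]] := (T_verts i0, T_verts i1); have [j2 e2] := T_verts i2.
case: (same_vertices_edge_or_flip (fv_inj (area_neq0 T)) e0 e1 e2).
  by move=> /edge_uniq [T2T _]; rewrite T2T eqxx in T_neq_T2.
by move=> flip; case: (flipped_faces_no_common_vertex nhyps flip e0).
Qed.

Lemma bip_diffE T b x (be : 'I_3 -> R) :
  x = \sum_i be i *: vshift pos vn fv T b x i ->
  x - \sum_i be i *: vert pos fv T i =
  lval pos fv T b x *: \sum_i be i *: acoef pos vn fv T b i.
Proof.
move=> x_eq; rewrite {1}x_eq /vshift.
under eq_bigr do rewrite scalerDr.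
rewrite big_split /= addrC addrK scaler_sumr.
by apply: eq_bigr => i _; rewrite scalerA [in RHS]scalerA mulrC.
Qed.

Lemma mesh_sub_region (Omega : set 'rV[R]_3) p :
  encloses pos fv Omega -> on_mesh pos fv p -> Omega p.
Proof.
move=> [/closure_id Omega_cl [_ boundary]] p_mesh.
have : (closure Omega `\` interior Omega) p by rewrite boundary.
by rewrite -Omega_cl => -[].
Qed.

End Mesh.

Theorem lemma1 (R : realType) (V F : finType) (pos vn : V -> 'rV[R]_3)
  (fv : F -> 'I_3 -> V) (Omega : set 'rV[R]_3)
  (Hwt : watertight pos fv) (Hnz : no_zero_area pos fv)
  (Henc : encloses pos fv Omega) (Hout : outward_normals pos fv Omega)
  (Hnorm : normal_hyps pos vn fv) (Hsurv : always_survives pos vn fv Omega)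
  (x s : 'rV[R]_3) (T : F) (al : 'I_3 -> R)
  (HxI : ~ exceptional pos vn fv x) (HxO : ~ Omega x)
  (Hs : dispersed_proj pos vn fv true x s)
  (Hal : forall i, 0 < al i) (Hal1 : \sum_i al i = 1)
  (HsT : s = \sum_i al i *: vert pos fv T i) :
  let l := lval pos fv T true x in
  let w := \sum_i al i *: acoef pos vn fv T true i in
  x - s = l *: w /\ w != 0 /\
  0 < vnorm (x - s) /\ x - s = vnorm (x - s) *: ((vnorm w)^-1 *: w).
Proof.
move=> l w.
have [_ [_ [T2 [_ [[l_ge0 [be [be_ge0 [be1 [x_eq s_eq]]]]] _]]]]] := Hs.
have T2T : T2 = T.
  by apply: (face_of_interior_point Hwt Hnz Hnorm Hal Hal1); rewrite -HsT; exists be.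
subst T2.
have be_al : be =1 al by apply: bary_coord_uniq (Hnz T) be1 Hal1 _; rewrite -s_eq.
have xs_eq : x - s = l *: w.
  by rewrite s_eq (bip_diffE x_eq) /w; under eq_bigr do rewrite be_al.
have xs_neq0 : x - s != 0.
  rewrite subr_eq0; apply/eqP => x_s; apply: HxO; rewrite x_s.
  by apply: mesh_sub_region Henc _; exists T; exists al; split=> // i; apply: ltW.
have w_neq0 : w != 0 by apply: contra xs_neq0 => /eqP w0; rewrite xs_eq w0 scaler0.
have l_gt0 : 0 < l.
  rewrite lt_neqAle l_ge0 andbT eq_sym.
  by apply: contra xs_neq0 => /eqP l0; rewrite xs_eq l0 scale0r.
split=> //; split=> //; split; first exact: vnorm_gt0.
by rewrite xs_eq -vnorm_pos_scale.
Qed.
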